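(* Let $\mathcal{X}$ be a set and let $G$ be an undirected graph on vertex set $\mathcal{X}$ with non-negative edge weights. Let $\varepsilon:\mathcal{X}\times\mathcal{X}\to\mathbb{R}\cup\{\infty\}$ be the shortest-path distance in $G$ (sum of edge weights along a path, minimized over paths). Let $M:\mathcal{X}^n\to\mathcal{Y}$ be a randomized algorithm. Suppose that for every pair $x,x'\in\mathcal{X}^n$ differing only in a single entry $i\in[n]$ such that $\{x_i,x'_i\}$ is an edge of $G$ with weight $\varepsilon_0$, we have $D_\infty(M(x)\|M(x'))\le \varepsilon_0$ (respectively, $D_*(M(x)\|M(x'))\le \frac12\varepsilon_0^2$). Then $M$ is $\varepsilon$-$\nabla$DP (respectively, $\varepsilon$-$\nabla$CDP).
   Context: For probability distributions $P,Q$ on a common space with $P\ll Q$: for $\lambda\in(1,\infty)$, $D_\lambda(P\|Q)=\frac{1}{\lambda-1}\log \mathbb{E}_{X\sim P}[(P(X)/Q(X))^{\lambda-1}]$ (Radon–Nikodym derivative), $D_*(P\|Q)=\sup_{\lambda\in(1,\infty)}\frac1\lambda D_\lambda(P\|Q)$, and $D_\infty(P\|Q)=\sup_{S:P(S)>0}\log(P(S)/Q(S))$; if $P\not\ll Q$ all these are $\infty$. For a symmetric non-negative function $\varepsilon:\mathcal{X}\times\mathcal{X}\to\mathbb{R}$, a randomized $M:\mathcal{X}^n\to\mathcal{Y}$ is $\varepsilon$-partially DP ($\varepsilon$-$\nabla$DP) if for all $x,x'\in\mathcal{X}^n$ differing only in entry $i$ and all measurable $S$, $\Pr[M(x)\in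 S]\le e^{\varepsilon(x_i,x'_i)}\Pr[M(x')\in S]$; it is $\varepsilon$-partially CDP ($\varepsilon$-$\nabla$CDP) if for all such $x,x'$, $D_*(M(x)\|M(x'))\le\frac12\varepsilon(x_i,x'_i)^2$. *)

From HB Require Import structures.
From mathcomp Require Import all_boot all_order all_algebra.
From mathcomp Require Import all_classical all_reals all_analysis.
Set Implicit Arguments. Unset Strict Implicit. Unset Printing Implicit Defensive.
Import Order.TTheory GRing.Theory Num.Theory.
Local Open Scope classical_set_scope.
Local Open Scope ring_scope.

Record wgraph (R : realType) (X : Type) := WGraph {
  edge : X -> X -> Prop;
  weight : X -> X -> R;
  edge_sym : forall x y, edge x y -> edge y x;
  weight_sym : forall x y, edge x y -> weight x y = weight y x;
  weight_ge0 : forall x y, edge x y -> 0 <= weight x y }.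

(* [walk G x p y]: x = v0, p = [:: v1; ...; vk] and vk = y, with
   consecutive vertices adjacent in G (k = 0 means x = y). *)
Fixpoint walk (R : realType) (X : Type) (G : wgraph R X) (x : X) (p : seq X) (y : X)
  : Prop :=
  match p with
  | [::] => x = y
  | z :: p' => edge G x z /\ walk G z p' y
  end.

Fixpoint walk_len (R : realType) (X : Type) (G : wgraph R X) (x : X) (p : seq X) : R :=
  match p with
  | [::] => 0
  | z :: p' => weight G x z + walk_len G z p'
  end.

(* shortest-path distance, +oo when there is no path *)
Definition spdist (R : realType) (X : Type) (G : wgraph R X) (x y : X) : \bar R :=
  ereal_inf [set (walk_len G x p)%:E | p in [set p | walk G x p y]].

Local Open Scope ereal_scope.
Local Open Scope charge_scope.

Definition log_ratio (R : realType) (p q : \bar R) : \bar R :=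
  if q == 0 then +oo else (ln (fine p / fine q))%R%:E.

Definition Dinf d (Y : measurableType d) (R : realType)
  (P Q : probability Y R) : \bar R :=
  if `[< (P `<< Q) >] then
    ereal_sup [set log_ratio (P S) (Q S) | S in [set S | measurable S /\ 0 < P S]]
  else +oo.

Definition Drenyi d (Y : measurableType d) (R : realType)
  (lam : R) (P Q : probability Y R) : \bar R :=
  if `[< (P `<< Q) >] then
    ((lam - 1)^-1)%R%:E *
      lne (\int[P]_y ((fine ('d (charge_of_finite_measure P) '/d Q y)) `^ (lam - 1))%R%:E)
  else +oo.

Definition Dstar d (Y : measurableType d) (R : realType)
  (P Q : probability Y R) : \bar R :=
  ereal_sup [set (lam^-1)%R%:E * Drenyi lam P Q | lam in [set lam : R | (1 < lam)%R]].

Definition differ_at (X : Type) (n : nat) (i : 'I_n) (x x' : 'I_n -> X) : Prop :=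
  forall j, j != i -> x j = x' j.

(* eps-partial DP, eps valued in R \cup {+oo} (a +oo bound is vacuous) *)
Definition partial_DP (R : realType) (X : Type) (n : nat) d (Y : measurableType d)
  (eps : X -> X -> \bar R) (M : ('I_n -> X) -> probability Y R) : Prop :=
  forall (x x' : 'I_n -> X) (i : 'I_n), differ_at i x x' ->
  forall e : R, eps (x i) (x' i) = e%:E ->
  forall S : set Y, measurable S -> M x S <= (expR e)%:E * M x' S.

Definition partial_CDP (R : realType) (X : Type) (n : nat) d (Y : measurableType d)
  (eps : X -> X -> \bar R) (M : ('I_n -> X) -> probability Y R) : Prop :=
  forall (x x' : 'I_n -> X) (i : 'I_n), differ_at i x x' ->
  Dstar (M x) (M x') <= (2^-1)%R%:E * (eps (x i) (x' i) * eps (x i) (x' i)).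

From HB Require Import structures.
From mathcomp Require Import all_boot all_order all_algebra.
From mathcomp Require Import all_classical all_reals all_analysis measurable_realfun.
From mathcomp Require Import ring lra.
Import Order.TTheory GRing.Theory Num.Theory.
Local Open Scope classical_set_scope.
Local Open Scope ring_scope.
Local Open Scope ereal_scope.
Set Implicit Arguments. Unset Strict Implicit.

(* Changing the i-th entry of x into x'_i one step at a time along a walk
   x_i = v_0, v_1, ..., v_k = x'_i of G produces a chain of hybrid databases,
   consecutive ones being neighbours across an edge.  Pure DP guarantees
   compose multiplicatively along the chain.  For concentrated DP, D_* <= rho
   amounts to the moment bounds E_Q[(dP/dQ)^lam] <= exp(lam (lam - 1) rho)
   for all lam > 1, and Hoelder's inequality with suitable exponents shows
   that bounds a^2/2 and b^2/2 compose into (a + b)^2/2.  Both kinds of bound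
   are closed under decreasing limits of the walk length, so they pass to the
   infimum over walks, i.e. to the shortest-path distance. *)

Lemma lee_mulexpR_closed (R : realType) (x y : \bar R) (c : R) : 0 <= x ->
  (forall c', (c < c')%R -> x <= (expR c')%:E * y) -> x <= (expR c)%:E * y.
Proof.
move=> x_ge0 x_le; apply/lee_mul01Pr => // r /andP[r_gt0 r_lt1].
have c_lt : (c < c - ln r)%R by rewrite ltrDl oppr_gt0 ln_lt0 ?r_gt0.
apply: le_trans (lee_wpmul2l _ (x_le _ c_lt)) _; first by rewrite lee_fin ltW.
by rewrite muleA -EFinM expRD expRN lnK ?posrE // mulrCA divff ?gt_eqF ?mulr1.
Qed.

Section dp_bound.
Context d (Y : measurableType d) (R : realType).
Implicit Types mu nu la : {measure set Y -> \bar R}.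

Definition dp_bound mu nu (eps : R) :=
  forall S, measurable S -> mu S <= (expR eps)%:E * nu S.

Lemma dp_bound_refl mu : dp_bound mu mu 0.
Proof. by move=> S mS; rewrite expR0 mul1e. Qed.

Lemma dp_bound_trans mu nu la a b :
  dp_bound mu nu a -> dp_bound nu la b -> dp_bound mu la (a + b).
Proof.
move=> munu nula S mS; apply: le_trans (munu _ mS) _.
by rewrite expRD EFinM -muleA lee_wpmul2l ?lee_fin ?expR_ge0 ?nula.
Qed.

Lemma dp_bound_le mu nu a b : (a <= b)%R -> dp_bound mu nu a -> dp_bound mu nu b.
Proof.
move=> ab munu S mS; apply: le_trans (munu _ mS) _.
by rewrite lee_wpmul2r // lee_fin ler_expR.
Qed.

Lemma dp_bound_closed mu nu c :
  (forall c', (c < c')%R -> dp_bound mu nu c') -> dp_bound mu nu c.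
Proof. by move=> munu S mS; apply: lee_mulexpR_closed => // c' /munu; apply. Qed.

End dp_bound.

Lemma Dinf_le_dp_bound d (Y : measurableType d) (R : realType)
  (P Q : probability Y R) (w : R) : Dinf P Q <= w%:E -> dp_bound P Q w.
Proof.
rewrite /Dinf; case: asboolP => [PQ|_]; last by rewrite leNgt ltey.
move=> Dinf_le S mS.
(* [dp_bound] sees [P] through its [measure] coercion, which [rewrite] would not match *)
change (P S <= (expR w)%:E * Q S).
have [PS0|PS_gt0] := leP (P S) 0.
  by apply: le_trans PS0 _; rewrite mule_ge0 ?lee_fin ?expR_ge0.
have QS_neq0 : Q S != 0.
  have /null_content_dominatesP PQ0 := PQ.
  by apply: contraTneq PS_gt0 => /(PQ0 _ mS) ->; rewrite ltxx.
have := le_trans (ereal_sup_ubound (ex_intro2 _ _ S (conj mS PS_gt0) erefl)) Dinf_le.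
rewrite /log_ratio (negbTE QS_neq0).
rewrite -(fineK (fin_num_measure P S mS)) -(fineK (fin_num_measure Q S mS)) in PS_gt0 QS_neq0 *.
have := fine_ge0 (measure_ge0 Q S).
move: (fine (P S)) (fine (Q S)) PS_gt0 QS_neq0 => p q.
rewrite /= !lee_fin lte_fin eqe => p_gt0 qn0 q_ge0 ln_le.
have q_gt0 : (0 < q)%R by rewrite lt_def qn0 q_ge0.
by move: ln_le; rewrite -ler_expR lnK ?posrE ?divr_gt0 // ler_pdivrMr.
Qed.

Lemma lne_scaled_le_expRP (R : realType) (lam c : R) (J : \bar R) :
  (1 < lam)%R -> 0 <= J ->
  (lam^-1)%:E * (((lam - 1)^-1)%:E * lne J) <= c%:E <->
  J <= (expR (lam * (lam - 1) * c))%:E.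
Proof.
move=> lam_gt1 J_ge0.
have lam_gt0 : (0 < lam)%R by rewrite (lt_trans ltr01).
have lam1_gt0 : (0 < lam - 1)%R by rewrite subr_gt0.
case: J J_ge0 => [r| |] //= r_ge0.
- have [r_le0|r_gt0] := leP r 0%R.
    have -> : r = 0%R by apply/eqP; rewrite eq_le r_le0 -lee_fin.
    rewrite !gt0_muleNy ?lte_fin ?invr_gt0 //.
    by split => _; rewrite ?leNye // lee_fin expR_ge0.
  rewrite -!EFinM !lee_fin mulrA -invfM ler_pdivrMl ?mulr_gt0 //.
  by rewrite -ler_expR lnK ?posrE // mulrA.
- by rewrite !gt0_muley ?lte_fin ?invr_gt0.
Qed.

Lemma Lnorm_le_expR d (Y : measurableType d) (R : realType)
  (mu : {measure set Y -> \bar R}) (h : Y -> R) (r A : R) :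
  (0 < r)%R -> (forall y, 0 <= h y)%R -> \int[mu]_y (h y `^ r)%:E <= (expR A)%:E ->
  'N[mu]_r%:E[EFin \o h] <= (expR (A / r))%:E.
Proof.
move=> r_gt0 h_ge0 int_le; rewrite unlock /=.
under eq_integral => y _ do rewrite ger0_norm //.
have r_inv_ge0 : (0 <= r^-1)%R by rewrite invr_ge0 ltW.
apply: le_trans (gt0_ler_poweR r_inv_ge0 _ _ int_le) _.
- by rewrite in_itv /= leey integral_ge0 // => y _; rewrite lee_fin powR_ge0.
- by rewrite in_itv /= leey lee_fin expR_ge0.
by rewrite poweR_EFin -expRM.
Qed.

Lemma hoelder_exponents (R : realType) (lam a b : R) :
  (0 < a)%R -> (0 < b)%R -> (1 < lam)%R -> exists p q : R,
  [/\ (0 < p)%R, (0 < q)%R, (p^-1 + q^-1 = 1)%R, (1 < lam * p)%R &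
  (lam * p * (lam * p - 1) * (2^-1 * a ^+ 2) / p +
   ((lam - 1) * q + 1) * ((lam - 1) * q) * (2^-1 * b ^+ 2) / q
    = lam * (lam - 1) * (2^-1 * (a + b) ^+ 2))%R].
Proof.
move=> a_gt0 b_gt0 lam_gt1.
have lam_neq0 : lam != 0%R by rewrite gt_eqF // (lt_trans ltr01).
have lam1_neq0 : (lam - 1 != 0)%R by rewrite subr_eq0 gt_eqF.
have s_gt0 : (0 < lam * a + (lam - 1) * b)%R by nra.
have [s_neq0 a_neq0 b_neq0] := And3 (gt_eqF s_gt0) (gt_eqF a_gt0) (gt_eqF b_gt0).
exists ((lam * a + (lam - 1) * b) / (lam * a))%R.
exists ((lam * a + (lam - 1) * b) / ((lam - 1) * b))%R.
split.
- by rewrite divr_gt0 // mulr_gt0 // (lt_trans ltr01).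
- by rewrite divr_gt0 // mulr_gt0 // subr_gt0.
- by field; rewrite s_neq0 lam_neq0 lam1_neq0 a_neq0 b_neq0.
- rewrite (_ : lam * _ = 1 + (lam - 1) * (a + b) / a)%R; last first.
    by field; rewrite lam_neq0 a_neq0.
  by rewrite ltrDl divr_gt0 // mulr_gt0 ?subr_gt0 // addr_gt0.
- by field; rewrite s_neq0 lam_neq0 lam1_neq0 a_neq0 b_neq0.
Qed.

Section renyi_moment.
Context d (Y : measurableType d) (R : realType).
Implicit Types (P Q W : probability Y R) (lam rho : R).

Local Notation rn_deriv := Radon_Nikodym_SigmaFinite.f.

(* Unlike ['d P '/d Q] in [Drenyi], this density is nonnegative everywhere;
   the two agree Q-almost everywhere. *)
Definition rn_density P Q (y : Y) : R := fine (rn_deriv P Q y).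

Lemma rn_density_ge0 P Q y : P `<< Q -> (0 <= rn_density P Q y)%R.
Proof. by move=> PQ; rewrite fine_ge0 // Radon_Nikodym_SigmaFinite.f_ge0. Qed.

Lemma EFin_rn_density P Q y : P `<< Q -> (rn_density P Q y)%:E = rn_deriv P Q y.
Proof. by move=> PQ; rewrite fineK // Radon_Nikodym_SigmaFinite.f_fin_num. Qed.

Lemma measurable_rn_density P Q : P `<< Q -> measurable_fun setT (rn_density P Q).
Proof.
move=> PQ; apply: (measurableT_comp (fine_measurable _)) => //.
exact/(measurable_int Q)/Radon_Nikodym_SigmaFinite.f_integrable.
Qed.

Lemma measurable_rn_density_powR P Q r :
  P `<< Q -> measurable_fun setT (fun y => rn_density P Q y `^ r)%R.
Proof. by move=> PQ; apply/(measurableT_comp (measurable_powR _))/measurable_rn_density. Qed.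

Lemma integral_rn_density P Q (phi : Y -> R) : P `<< Q ->
  (forall y, 0 <= phi y)%R -> measurable_fun setT phi ->
  \int[P]_y (phi y)%:E = \int[Q]_y (phi y * rn_density P Q y)%:E.
Proof.
move=> PQ phi_ge0 mphi.
rewrite -(Radon_Nikodym_SigmaFinite.change_of_variables PQ) //; last exact/measurable_EFinP.
by apply: eq_integral => y _; rewrite EFinM EFin_rn_density.
Qed.

Definition renyi_moment lam P Q := \int[P]_y (rn_density P Q y `^ (lam - 1))%:E.

Lemma renyi_moment_ge0 lam P Q : 0 <= renyi_moment lam P Q.
Proof. by apply: integral_ge0 => y _; rewrite lee_fin powR_ge0. Qed.

Lemma renyi_momentE lam P Q : P `<< Q -> (1 < lam)%R ->
  renyi_moment lam P Q = \int[Q]_y (rn_density P Q y `^ lam)%:E.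
Proof.
move=> PQ lam_gt1; rewrite /renyi_moment (integral_rn_density PQ); last 2 first.
- by move=> y; apply: powR_ge0.
- exact: measurable_rn_density_powR.
apply: eq_integral => y _; congr EFin.
by rewrite mulrC mulr_powRB1 ?rn_density_ge0 // (lt_trans ltr01).
Qed.

Lemma DrenyiE lam P Q : P `<< Q ->
  Drenyi lam P Q = ((lam - 1)^-1)%:E * lne (renyi_moment lam P Q).
Proof.
move=> PQ; rewrite /Drenyi; case: asboolP => [_|/(_ PQ)[]].
congr (_ * lne _).
apply: ae_eq_integral => //.
- apply/measurable_EFinP/(measurableT_comp (measurable_powR _)) => //.
  exact: (measurableT_comp (fine_measurable _)).
- exact/measurable_EFinP/measurable_rn_density_powR.
- apply: (null_dominates_ae_eq _ PQ) => //.
  apply: filterS (ae_eq_Radon_Nikodym_SigmaFinite PQ measurableT) => y dPQE /dPQE.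
  by rewrite /rn_density => ->.
Qed.

Lemma renyi_moment_chain lam P Q W : P `<< Q -> Q `<< W -> (1 < lam)%R ->
  renyi_moment lam P W =
  \int[Q]_y (rn_density P Q y `^ lam * rn_density Q W y `^ (lam - 1))%:E.
Proof.
move=> PQ QW lam_gt1; have PW := null_dominates_trans PQ QW.
pose h y := ((rn_density P Q y * rn_density Q W y) `^ (lam - 1))%R.
have mh : measurable_fun setT h.
  apply: (measurableT_comp (measurable_powR _)) => //.
  by apply: measurable_funM; exact: measurable_rn_density.
transitivity (\int[P]_y (h y)%:E).
  apply: ae_eq_integral => //.
  - exact/measurable_EFinP/measurable_rn_density_powR.
  - exact/measurable_EFinP.
  - apply: (null_dominates_ae_eq _ PW) => //.
    apply: filterS (Radon_Nikodym_SigmaFinite.chain_rule PQ QW measurableT).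
    move=> y chainE /chainE; rewrite /h /rn_density => -> /=.
    by rewrite fineM // Radon_Nikodym_SigmaFinite.f_fin_num.
rewrite (integral_rn_density PQ) //; last by move=> y; apply: powR_ge0.
apply: eq_integral => y _; congr EFin.
rewrite /h powRM ?rn_density_ge0 // mulrAC [X in (X * _)%R]mulrC.
by rewrite mulr_powRB1 ?rn_density_ge0 // (lt_trans ltr01).
Qed.

Definition moment_bounded P Q rho := P `<< Q /\
  forall lam, (1 < lam)%R -> renyi_moment lam P Q <= (expR (lam * (lam - 1) * rho))%:E.

Lemma Dstar_le_moment_boundedP P Q rho :
  Dstar P Q <= rho%:E <-> moment_bounded P Q rho.
Proof.
split => [Dstar_le|[PQ moment_le]].
  have Drenyi_le lam : (1 < lam)%R -> (lam^-1)%:E * Drenyi lam P Q <= rho%:E.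
    by move=> lam_gt1; apply: le_trans Dstar_le; apply: ereal_sup_ubound; exists lam.
  have PQ : P `<< Q.
    have := Drenyi_le 2%R (ltr1n _ 2); rewrite /Drenyi; case: asboolP => [//|_].
    by rewrite gt0_muley ?lte_fin ?invr_gt0.
  split => // lam lam_gt1; apply/(lne_scaled_le_expRP rho lam_gt1 (renyi_moment_ge0 _ _ _)).
  by rewrite -DrenyiE //; apply: Drenyi_le.
apply: ge_ereal_sup => _ [lam lam_gt1 <-]; rewrite DrenyiE //.
by apply/(lne_scaled_le_expRP rho lam_gt1 (renyi_moment_ge0 _ _ _))/moment_le.
Qed.

Lemma moment_bounded_le P Q rho rho' : (rho <= rho')%R ->
  moment_bounded P Q rho -> moment_bounded P Q rho'.
Proof.
move=> rho_le [PQ moment_le]; split => // lam lam_gt1.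
apply: le_trans (moment_le _ lam_gt1) _; rewrite lee_fin ler_expR ler_wpM2l //.
by rewrite mulr_ge0 ?subr_ge0 ?ltW // (lt_trans ltr01).
Qed.

Lemma moment_bounded_refl P : moment_bounded P P 0.
Proof.
split => // lam lam_gt1; rewrite mulr0 expR0.
have dPP1 : ae_eq P setT (rn_deriv P P) (cst 1).
  apply: integral_ae_eq => //; first exact: Radon_Nikodym_SigmaFinite.f_integrable.
  move=> E _ mE; rewrite integral_cst // mul1e.
  by rewrite -Radon_Nikodym_SigmaFinite.f_integral.
rewrite /renyi_moment (@ae_eq_integral _ _ _ P setT (cst 1)) //.
- by rewrite integral_cst // mul1e probability_le1.
- exact/measurable_EFinP/measurable_rn_density_powR.
- by apply: filterS dPP1 => y dPPE /dPPE; rewrite /rn_density => -> /=; rewrite powR1.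
Qed.

Lemma moment_bounded_closed P Q rho :
  (forall rho', (rho < rho')%R -> moment_bounded P Q rho') -> moment_bounded P Q rho.
Proof.
move=> bounded; have [PQ _] : moment_bounded P Q (rho + 1) by apply: bounded; rewrite ltrDl.
split => // lam lam_gt1.
have k_gt0 : (0 < lam * (lam - 1))%R by rewrite mulr_gt0 ?subr_gt0 // (lt_trans ltr01).
rewrite -[leRHS]mule1; apply: lee_mulexpR_closed => [|c c_gt]; first exact: renyi_moment_ge0.
have [_ /(_ lam lam_gt1)] : moment_bounded P Q (c / (lam * (lam - 1))).
  by apply: bounded; rewrite ltr_pdivlMr // mulrC.
by rewrite mule1 mulrC divfK ?gt_eqF.
Qed.

Lemma moment_bounded_triangle P Q W (a b : R) : (0 < a)%R -> (0 < b)%R ->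
  moment_bounded P Q (2^-1 * a ^+ 2) -> moment_bounded Q W (2^-1 * b ^+ 2) ->
  moment_bounded P W (2^-1 * (a + b) ^+ 2).
Proof.
move=> a_gt0 b_gt0 [PQ PQ_le] [QW QW_le].
split => [|lam lam_gt1]; first exact: null_dominates_trans PQ QW.
have [p [q [p_gt0 q_gt0 pq_conj lamp_gt1 exponentsE]]] :=
  hoelder_exponents a_gt0 b_gt0 lam_gt1.
have m_gt1 : (1 < (lam - 1) * q + 1)%R by rewrite ltrDr mulr_gt0 // subr_gt0.
rewrite (renyi_moment_chain PQ QW lam_gt1).
have := hoelder Q (measurable_rn_density_powR lam PQ)
  (measurable_rn_density_powR (lam - 1) QW) p_gt0 q_gt0 pq_conj.
rewrite Lnorm1; under eq_integral => y _ do rewrite /= ger0_norm ?mulr_ge0 ?powR_ge0 //.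
move/le_trans; apply; rewrite -exponentsE expRD EFinM.
apply: lee_pmul; rewrite ?Lnorm_ge0 //.
- apply: Lnorm_le_expR => // [y|]; first exact: powR_ge0.
  under eq_integral do rewrite -powRrM.
  by rewrite -renyi_momentE // PQ_le.
- apply: Lnorm_le_expR => // [y|]; first exact: powR_ge0.
  under eq_integral do rewrite -powRrM.
  by have := QW_le _ m_gt1; rewrite /renyi_moment addrK.
Qed.

Lemma moment_bounded_sqr_closed P Q (c : R) : (0 <= c)%R ->
  (forall c', (c < c')%R -> moment_bounded P Q (2^-1 * c' ^+ 2)) ->
  moment_bounded P Q (2^-1 * c ^+ 2).
Proof.
move=> c_ge0 bounded; apply: moment_bounded_closed => rho rho_gt.
have c2_lt : (c ^+ 2 < 2 * rho)%R by lra.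
have rho2_gt0 : (0 < 2 * rho)%R by apply: le_lt_trans c2_lt; rewrite sqr_ge0.
have sqrt_gt : (c < Num.sqrt (2 * rho))%R.
  by rewrite -[c]ger0_norm // -sqrtr_sqr ltr_sqrt.
by have := bounded _ sqrt_gt; rewrite sqr_sqrtr ?ltW // mulrA mulVf ?mul1r.
Qed.

Lemma moment_bounded_sqr_add P Q W (a b : R) : (0 <= a)%R -> (0 <= b)%R ->
  moment_bounded P Q (2^-1 * a ^+ 2) -> moment_bounded Q W (2^-1 * b ^+ 2) ->
  moment_bounded P W (2^-1 * (a + b) ^+ 2).
Proof.
move=> a_ge0 b_ge0 PQ_bounded QW_bounded.
apply: moment_bounded_sqr_closed => [|c c_gt]; first exact: addr_ge0.
pose t := ((c - (a + b)) / 2)%R.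
have t_gt0 : (0 < t)%R by rewrite divr_gt0 // subr_gt0.
have mono x : (0 <= x)%R -> (2^-1 * x ^+ 2 <= 2^-1 * (x + t) ^+ 2)%R.
  move=> x_ge0; have xt_ge0 : (0 <= x + t)%R by rewrite addr_ge0 // ltW.
  by rewrite ler_wpM2l // ler_sqr ?nnegrE // lerDl ltW.
rewrite (_ : c = a + t + (b + t))%R; last by rewrite /t; field.
apply: moment_bounded_triangle; rewrite ?ltr_wpDl //.
- exact: moment_bounded_le (mono _ a_ge0) PQ_bounded.
- exact: moment_bounded_le (mono _ b_ge0) QW_bounded.
Qed.

End renyi_moment.

Section walks.
Context (R : realType) (X : Type) (G : wgraph R X).

Lemma walk_len_ge0 x p y : walk G x p y -> (0 <= walk_len G x p)%R.
Proof.
elim: p x => [//|z p IHp] x /= [xz zpy].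
by rewrite addr_ge0 ?(weight_ge0 xz) ?(IHp _ zpy).
Qed.

Lemma spdist_ge0 x y : 0 <= spdist G x y.
Proof. by apply: le_ereal_inf_tmp => _ [p xpy <-]; rewrite lee_fin (walk_len_ge0 xpy). Qed.

Lemma spdist_closed_bound (bound : R -> Prop) x y e :
  (forall c c', (0 <= c <= c')%R -> bound c -> bound c') ->
  (forall c, (0 <= c)%R -> (forall c', (c < c')%R -> bound c') -> bound c) ->
  (forall p, walk G x p y -> bound (walk_len G x p)) ->
  spdist G x y = e%:E -> bound e.
Proof.
move=> bound_mono bound_closed bound_walk xyE.
have e_ge0 : (0 <= e)%R by rewrite -lee_fin -xyE spdist_ge0.
apply: bound_closed => // c e_lt_c.
have : spdist G x y < c%:E by rewrite xyE lte_fin.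
case/ereal_inf_lt => _ [p xpy <-]; rewrite lte_fin => len_lt.
by apply: bound_mono (bound_walk _ xpy); rewrite (walk_len_ge0 xpy) ltW.
Qed.

End walks.

Section hybrid.
Context (R : realType) (X : Type) (G : wgraph R X) (n : nat).
Implicit Types x y z : 'I_n -> X.

Lemma differ_at_eq i x y : differ_at i x y -> x i = y i -> x = y.
Proof. by move=> xy xyi; apply: funext => j; have [->|/xy] := eqVneq j i. Qed.

Lemma differ_at_dfwith i x (v : X) : differ_at i x (@dfwith _ _ x i v).
Proof. by move=> j ji; apply/esym/dfwith_out; rewrite eq_sym. Qed.

Lemma differ_at_dfwithl i x y (v : X) :
  differ_at i x y -> differ_at i (@dfwith _ _ x i v) y.
Proof. by move=> xy j ji; rewrite -(xy _ ji); apply: dfwith_out; rewrite eq_sym. Qed.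

Variable bound : ('I_n -> X) -> ('I_n -> X) -> R -> Prop.
Hypothesis bound_refl : forall x, bound x x 0.
Hypothesis bound_edge : forall x y i, differ_at i x y -> edge G (x i) (y i) ->
  bound x y (weight G (x i) (y i)).
Hypothesis bound_trans : forall x y z a b, (0 <= a)%R -> (0 <= b)%R ->
  bound x y a -> bound y z b -> bound x z (a + b).

Lemma hybrid_walk_bound i p x y : differ_at i x y -> walk G (x i) p (y i) ->
  bound x y (walk_len G (x i) p).
Proof.
elim: p x => [|v p IHp] x xy /=; first by move/(differ_at_eq xy) <-.
case=> xv vpy; pose xv' := @dfwith _ _ x i v.
have xv'_i : xv' i = v by exact: dfwith_in.
apply: bound_trans (weight_ge0 xv) (walk_len_ge0 vpy) _ _.
- by have := bound_edge (@differ_at_dfwith i x v); rewrite -/xv' xv'_i; apply.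
- by have := IHp xv' (differ_at_dfwithl v xy); rewrite xv'_i; apply.
Qed.

End hybrid.

Section partial_privacy.
Context (R : realType) (X : Type) (G : wgraph R X) (n : nat)
  (d : measure_display) (Y : measurableType d)
  (M : ('I_n -> X) -> probability Y R).

Lemma edge_Dinf_partial_DP :
  (forall x x' i, differ_at i x x' -> edge G (x i) (x' i) ->
    Dinf (M x) (M x') <= (weight G (x i) (x' i))%:E) ->
  partial_DP (spdist G) M.
Proof.
move=> edge_Dinf x x' i xx' e xx'E.
apply: (spdist_closed_bound (bound := dp_bound (M x) (M x'))) xx'E.
- by move=> c c' /andP[_]; apply: dp_bound_le.
- by move=> c _; apply: dp_bound_closed.
move=> p; apply: (hybrid_walk_bound (bound := fun y y' => dp_bound (M y) (M y'))) xx'.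
- by move=> y; apply: dp_bound_refl.
- by move=> y y' j yy' /(edge_Dinf _ _ _ yy'); apply: Dinf_le_dp_bound.
- by move=> y y' y'' a b _ _; apply: dp_bound_trans.
Qed.

Lemma edge_Dstar_partial_CDP :
  (forall x x' i, differ_at i x x' -> edge G (x i) (x' i) ->
    Dstar (M x) (M x') <= (2^-1 * (weight G (x i) (x' i)) ^+ 2)%:E) ->
  partial_CDP (spdist G) M.
Proof.
move=> edge_Dstar x x' i xx'.
case xx'E : (spdist G (x i) (x' i)) (spdist_ge0 G (x i) (x' i)) => [e| |] // _;
  last by rewrite mulyy gt0_muley ?lte_fin ?invr_gt0 // leey.
apply/Dstar_le_moment_boundedP.
apply: (spdist_closed_bound
  (bound := fun c => moment_bounded (M x) (M x') (2^-1 * c ^+ 2))) xx'E.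
- move=> c c' /andP[c_ge0 c_le]; apply: moment_bounded_le.
  by rewrite ler_wpM2l // ler_sqr ?nnegrE // (le_trans c_ge0).
- by move=> c c_ge0; apply: moment_bounded_sqr_closed.
move=> p; apply: (hybrid_walk_bound
  (bound := fun y y' c => moment_bounded (M y) (M y') (2^-1 * c ^+ 2))) xx'.
- by move=> y; rewrite expr0n mulr0; apply: moment_bounded_refl.
- by move=> y y' j yy' /(edge_Dstar _ _ _ yy') /Dstar_le_moment_boundedP.
- by move=> y y' y'' a b a_ge0 b_ge0; apply: moment_bounded_sqr_add.
Qed.

End partial_privacy.

Theorem lemma2p7 (R : realType) (X : Type) (G : wgraph R X) (n : nat)
  (d : measure_display) (Y : measurableType d)
  (M : ('I_n -> X) -> probability Y R) :
  ((forall (x x' : 'I_n -> X) (i : 'I_n), differ_at i x x' ->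
      edge G (x i) (x' i) ->
      Dinf (M x) (M x') <= (weight G (x i) (x' i))%:E) ->
    partial_DP (spdist G) M) /\
  ((forall (x x' : 'I_n -> X) (i : 'I_n), differ_at i x x' ->
      edge G (x i) (x' i) ->
      Dstar (M x) (M x') <= (2^-1 * (weight G (x i) (x' i)) ^+ 2)%:E) ->
    partial_CDP (spdist G) M).
Proof. by split; [apply: edge_Dinf_partial_DP | apply: edge_Dstar_partial_CDP]. Qed.
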